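(* Fix positive integers $t\leqslant m\leqslant n$, let $X$ be an $m\times n$ matrix of indeterminates over a field $\mathbb{F}$ of prime characteristic, $R=\mathbb{F}[X]$, and $I_t$ the ideal generated by the $t\times t$ minors of $X$. Then for every integer $k$ with $0\leqslant k\leqslant t-1$, \[ \operatorname{fpt}(I_t)\ \leqslant\ \frac{(m-k)(n-k)}{t-k}. \]
   Context: Let $R$ be a polynomial ring over a field of characteristic $p>0$ with homogeneous maximal ideal $\mathfrak{m}$. For $q=p^e$, $\mathfrak{m}^{[q]}$ denotes the ideal generated by the $q$-th powers of the variables. For a homogeneous proper ideal $I$, $\nu_I(q)=\max\{r\in\mathbb{N} : I^r\not\subseteq \mathfrak{m}^{[q]}\}$, and $\operatorname{fpt}(I)=\lim_{e\to\infty}\nu_I(p^e)/p^e$ (the $F$-pure threshold). *)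

From HB Require Import structures.
From mathcomp Require Import all_boot all_order all_algebra.
From mathcomp Require Import mpoly.
From mathcomp Require Import all_classical all_reals all_analysis.

Set Implicit Arguments.
Unset Strict Implicit.
Unset Printing Implicit Defensive.

Import Order.TTheory GRing.Theory Num.Theory.
Import numFieldNormedType.Exports.
Local Open Scope ring_scope.
Local Open Scope classical_set_scope.

Definition in_ideal (A : comNzRingType) (S : A -> Prop) (f : A) : Prop :=
  exists (cs gs : seq A),
    size cs = size gs /\ (forall g, g \in gs -> S g) /\
    f = \sum_(i < size gs) cs`_i * gs`_i.

Definition pow_gens (A : comNzRingType) (S : A -> Prop) (r : nat) (f : A) : Prop :=
  exists hs : seq A,
    size hs = r /\ (forall h, h \in hs -> in_ideal S h) /\ f = \prod_(h <- hs) h.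

Definition in_ideal_pow (A : comNzRingType) (S : A -> Prop) (r : nat) (f : A) : Prop :=
  in_ideal (pow_gens S r) f.

Definition ideal_sub (A : comNzRingType) (S T : A -> Prop) : Prop :=
  forall f, in_ideal S f -> in_ideal T f.

Definition var (N : nat) (F : fieldType) (i : 'I_N) : mpoly.mpoly N F :=
  mpoly.mpolyX F (mpoly.mnm1 i).

(* generators of the Frobenius power m^[q] of the homogeneous maximal ideal *)
Definition frob_max_gens (N : nat) (F : fieldType) (q : nat)
    (f : mpoly.mpoly N F) : Prop :=
  exists i : 'I_N, f = @var N F i ^+ q.

Definition nu (R : realType) (N : nat) (F : fieldType)
    (S : mpoly.mpoly N F -> Prop) (q : nat) : R :=
  sup [set (r%:R : R) | r in
        [set r : nat | ~ ideal_sub (pow_gens S r) (@frob_max_gens N F q)]].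

Definition fpt (R : realType) (N : nat) (F : fieldType) (p : nat)
    (S : mpoly.mpoly N F -> Prop) : R :=
  limn (fun e : nat => (nu R S (p ^ e) / (p ^ e)%:R : R)).

Definition genmx (F : fieldType) (m n : nat) : 'M[mpoly.mpoly (m * n) F]_(m, n) :=
  \matrix_(i < m, j < n) @var (m * n) F (mxvec_index i j).

Definition minors_gens (F : fieldType) (m n t : nat)
    (f : mpoly.mpoly (m * n) F) : Prop :=
  exists (rs : 'I_t -> 'I_m) (cs : 'I_t -> 'I_n),
    injective rs /\ injective cs /\ f = \det (mxsub rs cs (genmx F m n)).

(* Let [delta] be the leading [k x k] minor of [X] and [schur] the matrix [delta] times the
   Schur complement of that block.  From [delta X = P Q + schur] with [rank (P Q) <= k], the
   product of [delta ^+ t] with a [t]-minor is a combination of products of [t - k] entries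
   of [schur], all in the [(m - k) x (n - k)] lower-right corner.  So if
   [r (t - k) > (m - k) (n - k) (q - 1)], by pigeonhole [delta ^+ (t r q)] times any element
   of [I_t^r] is a combination of multiples of [q]-th powers of corner entries of [schur].
   To see that [f] in [I_t^r] has no monomial [x^a] with all [a_i < q], apply the operator
   extracting the coefficients of the monomials [x^(a + q b)]: it pulls a factor [w ^+ q]
   out as [w] with Frobenius-twisted coefficients.  The specialization [x_ij |-> 'X] for
   [i = j < k], [x_ij |-> 0] otherwise, kills the twist of every corner entry of [schur] and
   sends that of [delta] to ['X ^+ k], a non-zero-divisor, so the coefficient of [x^a] in [f]
   is [0].  Hence [I_t^r] lies in [m^[q]], i.e. [nu(q) <= (m - k) (n - k) q / (t - k)]. *)

From Pilot Require Import Defs.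
From HB Require Import structures.
From mathcomp Require Import all_boot all_order all_algebra.
From mathcomp Require Import mpoly.
From mathcomp Require Import all_classical all_reals all_analysis.
From mathcomp Require Import perm.
Import Order.TTheory GRing.Theory Num.Theory.
Import numFieldNormedType.Exports.
Local Open Scope ring_scope.
Set Implicit Arguments.
Unset Strict Implicit.
Unset Printing Implicit Defensive.

Section IdealCombinations.
Variable A : comNzRingType.
Implicit Types (S T U : A -> Prop) (f g : A).

(* [in_ideal] with coefficients and generators zipped into one list, which is easier
   to concatenate and map over. *)
Definition lincomb S f := exists l : seq (A * A),
  (forall x, x \in l -> S x.2) /\ f = \sum_(x <- l) x.1 * x.2.

Lemma in_idealP S f : in_ideal S f <-> lincomb S f.
Proof.
split.
- move=> [cs [gs [hs [hS ->]]]]; exists (zip cs gs); split.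
    move=> x /(map_f (@snd A A)); rewrite -/(unzip2 _) unzip2_zip ?hs //.
    exact: hS.
  rewrite (big_nth (0, 0)) big_mkord size_zip hs minnn.
  by apply: eq_bigr => i _; rewrite nth_zip.
- move=> [l [hS ->]]; exists (unzip1 l), (unzip2 l); split; first by rewrite !size_map.
  split; first by move=> g /mapP [x xl ->]; apply: hS.
  rewrite (big_nth (0, 0)) big_mkord size_map.
  by apply: eq_bigr => i _; rewrite !(nth_map (0, 0)).
Qed.

Lemma lincomb0 S : lincomb S 0.
Proof. by exists [::]; split => //; rewrite big_nil. Qed.

Lemma lincomb_gen S g : S g -> lincomb S g.
Proof.
move=> Sg; exists [:: (1, g)]; split; last by rewrite big_seq1 mul1r.
by move=> x; rewrite inE => /eqP ->.
Qed.

Lemma lincombD S f g : lincomb S f -> lincomb S g -> lincomb S (f + g).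
Proof.
move=> [l1 [h1 ->]] [l2 [h2 ->]]; exists (l1 ++ l2); split; last by rewrite big_cat.
by move=> x; rewrite mem_cat => /orP [] ?; [apply: h1 | apply: h2].
Qed.

Lemma lincombMl S c f : lincomb S f -> lincomb S (c * f).
Proof.
move=> [l [h ->]]; exists [seq (c * x.1, x.2) | x <- l]; split.
  by move=> x /mapP [y yl ->]; exact: (h _ yl).
by rewrite big_map mulr_sumr; apply: eq_bigr => x _; rewrite mulrA.
Qed.

Lemma lincomb_sum S (I : eqType) (r : seq I) (G : I -> A) :
  (forall i, i \in r -> lincomb S (G i)) -> lincomb S (\sum_(i <- r) G i).
Proof.
elim: r => [|a r IH] h; first by rewrite big_nil; apply: lincomb0.
rewrite big_cons; apply: lincombD; first by apply: h; rewrite inE eqxx.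
by apply: IH => i ir; apply: h; rewrite inE ir orbT.
Qed.

Lemma lincomb_sum_fin S (I : finType) (P : pred I) (G : I -> A) :
  (forall i, P i -> lincomb S (G i)) -> lincomb S (\sum_(i | P i) G i).
Proof.
move=> h; rewrite big_mkcond /=; apply: lincomb_sum => i _.
by case: ifP => Pi; [apply: h | apply: lincomb0].
Qed.

Lemma lincomb_trans S T f :
  lincomb S f -> (forall g, S g -> lincomb T g) -> lincomb T f.
Proof.
move=> [l [h ->]] hST; apply: lincomb_sum => x xl.
by apply: lincombMl; apply: hST; exact: h.
Qed.

Lemma lincombMl_trans S T d f :
  lincomb S f -> (forall g, S g -> lincomb T (d * g)) -> lincomb T (d * f).
Proof.
move=> [l [h ->]] hST; rewrite mulr_sumr; apply: lincomb_sum => x xl.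
by rewrite mulrCA; apply: lincombMl; apply: hST; exact: h.
Qed.

Lemma lincombM S T U f g : lincomb S f -> lincomb T g ->
  (forall x y, S x -> T y -> lincomb U (x * y)) -> lincomb U (f * g).
Proof.
move=> [l1 [h1 ->]] [l2 [h2 ->]] hU; rewrite mulr_suml; apply: lincomb_sum => x xl.
rewrite mulr_sumr; apply: lincomb_sum => y yl.
by rewrite mulrACA; apply: lincombMl; apply: hU; [exact: h1 | exact: h2].
Qed.

End IdealCombinations.

Section IteratedFrobenius.
Variables (R : comNzRingType) (p : nat) (hp : p \in [pchar R]) (e : nat).

Definition frobn : R -> R := iter e (pFrobenius_aut hp).

Lemma frobnE x : frobn x = x ^+ (p ^ e).
Proof.
rewrite /frobn; elim: e => [|i IH]; first by rewrite expr1.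
by rewrite iterS IH pFrobenius_autE expnSr exprM.
Qed.

Lemma frobn_is_additive : additive frobn.
Proof.
rewrite /frobn => x y; elim: e => [//|i IH].
by rewrite !iterS IH rmorphB.
Qed.

Lemma frobn_is_multiplicative : multiplicative frobn.
Proof.
rewrite /frobn; split => [x y|]; elim: e => [//|i IH].
  by rewrite !iterS IH rmorphM.
by rewrite iterS IH rmorph1.
Qed.

HB.instance Definition _ := GRing.isAdditive.Build R R frobn frobn_is_additive.
HB.instance Definition _ :=
  GRing.isMultiplicative.Build R R frobn frobn_is_multiplicative.

End IteratedFrobenius.

Section MpolyCoefficients.
Variables (R : comNzRingType) (N : nat).
Implicit Types (g : {mpoly R[N]}).

Lemma big_msupp_widen (V : lmodType R) (G : 'X_{1..N} -> V) g s :
  uniq s -> {subset msupp g <= s} ->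
  \sum_(m <- msupp g) g@_m *: G m = \sum_(m <- s) g@_m *: G m.
Proof.
move=> us sub; rewrite [RHS](bigID (fun m => m \in msupp g)) /=.
rewrite [X in _ = _ + X]big1 ?addr0; last first.
  by move=> m /memN_msupp_eq0 ->; rewrite scale0r.
rewrite -[RHS]big_filter; apply: perm_big.
apply: uniq_perm; [exact: msupp_uniq | exact: filter_uniq |].
by move=> m; rewrite mem_filter; case mg: (m \in msupp g) => //=; rewrite sub.
Qed.

Lemma sum_mcoeff_delta g a : \sum_(m <- msupp g) g@_m * (m == a)%:R = g@_a.
Proof.
case ag: (a \in msupp g).
  rewrite (bigD1_seq a) ?msupp_uniq //= eqxx mulr1 big1 ?addr0 //.
  by move=> m /negbTE ->; rewrite mulr0.
rewrite big1_seq; last first.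
  by move=> m /andP [_ mg]; case: eqP mg ag => [-> -> //|_ _ _]; rewrite mulr0.
by rewrite memN_msupp_eq0 // ag.
Qed.

Lemma horner0_mmap (v : 'I_N -> {poly R}) g :
  (forall i, (v i).[0] = 0) -> (mmap (@polyC R) v g).[0] = g@_0.
Proof.
move=> hv; rewrite /mmap horner_sum -sum_mcoeff_delta; apply: eq_bigr => m _.
rewrite hornerM hornerC /mmap1 horner_prod; congr (_ * _).
have [->|nz] := eqVneq m 0%MM.
  by rewrite big1 // => i _; rewrite mnm0E expr0 hornerC.
have [i hi] : exists i, m i != 0%N.
  apply/existsP; move: nz; apply: contraR; rewrite negb_exists => /forallP h.
  by apply/eqP/mnmP => i; rewrite mnm0E; have := h i; rewrite negbK => /eqP.
by rewrite (bigD1 i) //= horner_exp hv expr0n (negbTE hi) mul0r.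
Qed.

End MpolyCoefficients.

Lemma lincomb_frob_max_gens (F : fieldType) (N q : nat) (g : {mpoly F[N]}) :
  (forall b : 'X_{1..N}, (forall i, b i < q)%N -> g@_b = 0) ->
  lincomb (@frob_max_gens N F q) g.
Proof.
move=> hg; rewrite (mpolyE g); apply: lincomb_sum => m mg.
have [i hi] : exists i, (q <= m i)%N.
  apply/existsP; move: mg; apply: contraLR; rewrite negb_exists => /forallP h.
  by rewrite mcoeff_msupp hg ?eqxx // => i; rewrite ltnNge h.
have le : (U_(i) *+ q <= m)%MM.
  apply/mnm_lepP => j; rewrite mulmnE mnm1E.
  by case: eqP => [<-|_]; rewrite ?mul1n ?mul0n.
have -> : 'X_[m] = 'X_[m - U_(i) *+ q] * 'X_i ^+ q :> {mpoly F[N]}.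
  by rewrite mpolyXn -mpolyXD submK.
by rewrite scalerAl; apply: lincombMl; apply: lincomb_gen; exists i.
Qed.

Lemma leq_dvdn_subDMq (x b c q : nat) : (c < q)%N ->
  ((c <= x + b * q) && (q %| x + b * q - c))%N = ((c <= x) && (q %| x - c))%N.
Proof.
move=> c_lt_q; case: (leqP c x) => hx.
  by rewrite (leq_trans hx (leq_addr _ _)) /= -addnBAC // dvdn_addl // dvdn_mull.
apply/negbTE/negP => /andP [h1 /dvdnP [d hd]].
have : ((x + b * q) %% q = (d * q + c) %% q)%N by rewrite -hd subnK.
rewrite [(x + _)%N]addnC !modnMDl !modn_small //; last exact: ltn_trans hx _.
by move=> exc; rewrite exc ltnn in hx.
Qed.

Section Cartier.
Variables (R : comNzRingType) (N q : nat) (a : 'X_{1..N}).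
Hypothesis q_gt0 : (0 < q)%N.
Local Notation RR := {mpoly R[N]}.

(* [cartier] sends [x^(a + q b)] to [x^b] and kills every other monomial. *)
Definition cartier_mem (m : 'X_{1..N}) :=
  [forall i, (a i <= m i)%N && (q %| m i - a i)%N].
Definition cartier_quo (m : 'X_{1..N}) : 'X_{1..N} :=
  [multinom ((m i - a i) %/ q)%N | i < N].
Definition cartier_mon (m : 'X_{1..N}) : RR :=
  if cartier_mem m then 'X_[cartier_quo m] else 0.
Definition cartier (g : RR) : RR := \sum_(m <- msupp g) g@_m *: cartier_mon m.

Lemma cartier_is_linear : linear cartier.
Proof.
move=> c g h; pose s := undup (msupp g ++ msupp h).
have us : uniq s by apply: undup_uniq.
have sg : {subset msupp g <= s} by move=> m mg; rewrite mem_undup mem_cat mg.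
have sh : {subset msupp h <= s} by move=> m mh; rewrite mem_undup mem_cat mh orbT.
have sgh : {subset msupp (c *: g + h) <= s}.
  move=> m /msuppD_le; rewrite mem_cat => /orP [/msuppZ_le|] mm; [exact: sg | exact: sh].
rewrite /cartier (big_msupp_widen _ us sg) (big_msupp_widen _ us sh).
rewrite (big_msupp_widen _ us sgh) scaler_sumr -big_split; apply: eq_bigr => m _.
by rewrite mcoeffD mcoeffZ scalerDl scalerA.
Qed.
HB.instance Definition _ := GRing.isLinear.Build R RR RR _ cartier cartier_is_linear.

Lemma cartierX m : cartier 'X_[m] = cartier_mon m.
Proof. by rewrite /cartier msuppX big_seq1 mcoeffX eqxx scale1r. Qed.

Lemma cartier_quo_eq0 m : cartier_mem m -> (cartier_quo m == 0%MM) = (m == a).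
Proof.
move=> /forallP mem_m; apply/eqP/eqP => [quo0|->]; apply/mnmP => i; last first.
  by rewrite mnmE subnn div0n mnm0E.
move/mnmP/(_ i): quo0; rewrite mnmE mnm0E => quo0.
have /andP [le_am dvd_am] := mem_m i.
by apply/eqP; rewrite eqn_leq le_am -subn_eq0 -(divnK dvd_am) quo0 mul0n.
Qed.

Lemma mcoeff0_cartier g : (cartier g)@_0 = g@_a.
Proof.
rewrite /cartier (raddf_sum (mcoeff 0%MM)) -sum_mcoeff_delta; apply: eq_bigr => m _.
rewrite /= mcoeffZ /cartier_mon; congr (_ * _); case: ifP => [mem_m|not_mem].
  by rewrite mcoeffX cartier_quo_eq0.
rewrite mcoeff0; case: eqP not_mem => // ->.
suff -> : cartier_mem a by [].
by apply/forallP => i; rewrite leqnn subnn dvdn0.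
Qed.

Hypothesis a_lt_q : forall i, (a i < q)%N.

Lemma cartier_memDq m b : cartier_mem (m + b *+ q)%MM = cartier_mem m.
Proof.
by apply/forallP/forallP => h i; move: (h i); rewrite mnmDE mulmnE leq_dvdn_subDMq.
Qed.

Lemma cartier_monDq m b : cartier_mon (m + b *+ q)%MM = 'X_[b] * cartier_mon m.
Proof.
rewrite /cartier_mon cartier_memDq; case: ifP => [/forallP mem_m|_]; last by rewrite mulr0.
rewrite -mpolyXD; congr 'X_[_]; apply/mnmP => i.
rewrite /cartier_quo mnmDE !mnmE mulmnE; have /andP [h1 _] := mem_m i.
by rewrite -addnBAC // divnDr ?dvdn_mull // mulnK // addnC.
Qed.

Lemma cartierXqM b g : cartier ('X_[b *+ q] * g) = 'X_[b] * cartier g.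
Proof.
rewrite {1}(mpolyE g) mulr_sumr linear_sum /= [cartier g]/cartier mulr_sumr.
apply: eq_bigr => m _; rewrite -scalerAr -mpolyXD linearZ /= cartierX addmC.
by rewrite cartier_monDq scalerAr.
Qed.

End Cartier.

Lemma pchar_expn_gt0 (R : nzRingType) (p : nat) (e : nat) :
  p \in [pchar R] -> (0 < p ^ e)%N.
Proof. by move=> hp; rewrite expn_gt0 prime_gt0 // (pcharf_prime hp). Qed.

Section CartierFrobenius.
Variables (R : comNzRingType) (N p : nat) (hp : p \in [pchar R]) (e : nat).
Variable a : 'X_{1..N}.
Hypothesis a_lt_q : forall i, (a i < p ^ e)%N.
Local Notation q := (p ^ e)%N.

(* The [q]-th power of [w] is [w] with Frobenius-twisted coefficients evaluated at [x^q]. *)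
Lemma cartier_frobM (w g : {mpoly R[N]}) :
  cartier q a (w ^+ q * g) = map_mpoly (frobn hp e) w * cartier q a g.
Proof.
have hpR : p \in [pchar {mpoly R[N]}] := rmorph_pchar (mpolyC N (R := R)) hp.
have -> : w ^+ q = \sum_(m <- msupp w) frobn hp e w@_m *: 'X_[m *+ q].
  rewrite -(frobnE hpR) {1}(mpolyE w) rmorph_sum; apply: eq_bigr => m _.
  by rewrite /= !frobnE exprZn mpolyXn.
have -> : map_mpoly (frobn hp e) w = \sum_(m <- msupp w) frobn hp e w@_m *: 'X_[m].
  by apply: eq_bigr => m _; rewrite mmap1_id mul_mpolyC.
rewrite !mulr_suml linear_sum; apply: eq_bigr => m _.
by rewrite -!scalerAl linearZ /= cartierXqM // (pchar_expn_gt0 e hp).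
Qed.

End CartierFrobenius.

Section RowMix.
Variables (R : comNzRingType) (t : nat).

Definition row_mix (f : {ffun 'I_t -> bool}) (A E : 'M[R]_t) : 'M[R]_t :=
  \matrix_(i, j) if f i then E i j else A i j.

Lemma detD_row_mix (A E : 'M[R]_t) :
  \det (A + E) = \sum_(f : {ffun 'I_t -> bool}) \det (row_mix f A E).
Proof.
have prodD (s : {perm 'I_t}) : \prod_i (A + E) i (s i) =
    \sum_(f : {ffun 'I_t -> bool}) \prod_i row_mix f A E i (s i).
  rewrite (eq_bigr (fun i => \sum_(b : bool) (if b then E i (s i) else A i (s i)))).
    by rewrite bigA_distr_bigA; apply: eq_bigr => f _; apply: eq_bigr => i _; rewrite mxE.
  by move=> i _; rewrite big_bool /= mxE addrC.
rewrite /determinant (eq_bigr (fun s : {perm 'I_t} => \sum_(f : {ffun 'I_t -> bool})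
   (-1) ^+ s * \prod_i row_mix f A E i (s i))); first by rewrite exchange_big.
by move=> s _; rewrite prodD mulr_sumr.
Qed.

End RowMix.

Lemma map_row_mix (R S : comNzRingType) (g : R -> S) t f (A E : 'M[R]_t) :
  map_mx g (row_mix f A E) = row_mix f (map_mx g A) (map_mx g E).
Proof. by apply/matrixP => i j; rewrite !mxE; case: (f i). Qed.

Lemma mxrank_sum_le (K : fieldType) (a b : nat) (I : Type) (r : seq I)
    (G : I -> 'M[K]_(a, b)) :
  (\rank (\sum_(i <- r) G i)%R <= \sum_(i <- r) \rank (G i))%N.
Proof.
elim: r => [|x r IH]; first by rewrite !big_nil mxrank0.
by rewrite !big_cons; apply: leq_trans (mxrank_add _ _) _; exact: leq_add.
Qed.

Lemma mxrank_row_mix_mul (K : fieldType) (t k : nat) (f : {ffun 'I_t -> bool})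
    (E : 'M[K]_t) (P : 'M[K]_(t, k)) (Q : 'M[K]_(k, t)) :
  (\rank (row_mix f (P *m Q) E) <= \sum_i (f i : nat) + k)%N.
Proof.
pose D1 : 'M[K]_t := diag_mx (\row_i (f i)%:R).
pose D2 : 'M[K]_t := diag_mx (\row_i (~~ f i)%:R).
have -> : row_mix f (P *m Q) E = D1 *m E + D2 *m P *m Q.
  apply/matrixP => i j; rewrite -mulmxA !mul_diag_mx !mxE.
  by case: (f i); rewrite /= ?mul1r ?mul0r ?addr0 ?add0r.
have rank_D1 : (\rank D1 <= \sum_i (f i : nat))%N.
  rewrite /D1 diag_mx_sum_delta; apply: leq_trans (mxrank_sum_le _ _) _.
  apply: leq_sum => i _; rewrite mxE.
  by case: (f i); rewrite ?scale1r ?scale0r ?mxrank0 ?mxrank_delta.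
apply: leq_trans (mxrank_add _ _) _; apply: leq_add; last exact: mulmx_max_rank.
exact: leq_trans (mxrankM_maxl _ _) rank_D1.
Qed.

Lemma det_row_mix_mul_eq0 (R : idomainType) (t k : nat) (f : {ffun 'I_t -> bool})
    (E : 'M[R]_t) (P : 'M[R]_(t, k)) (Q : 'M[R]_(k, t)) :
  (\sum_i (f i : nat) + k < t)%N -> \det (row_mix f (P *m Q) E) = 0.
Proof.
move=> small_f; apply/eqP; rewrite -(tofrac_eq0 (R := R)) -det_map_mx.
rewrite map_row_mix map_mxM; set M := row_mix _ _ _.
apply: contraLR small_f => det_neq0; rewrite -leqNgt.
have /eqP full_M : row_free M by rewrite row_free_unit unitmxE unitfE.
by rewrite -[X in (X <= _)%N]full_M mxrank_row_mix_mul.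
Qed.

Lemma size_sum_count_mem (T : finType) (l : seq T) :
  size l = (\sum_(x : T) count_mem x l)%N.
Proof.
elim: l => [|y l IH]; first by rewrite big1.
rewrite /= big_split /= -IH (bigD1 y) //= eqxx big1 ?addn0 ?add1n //.
by move=> x /negbTE; rewrite eq_sym => ->.
Qed.

Lemma sum_ord_geq (a k : nat) : (\sum_(i < a) (k <= i : nat) = a - k)%N.
Proof.
elim: a => [|a IH]; first by rewrite big_ord0.
rewrite big_ord_recr /= IH; case: (leqP k a) => h; first by rewrite addn1 subSn.
by rewrite addn0 (eqP (ltnW h)) (eqP h).
Qed.

Lemma count_mem_pigeonhole (T : finType) (A : {pred T}) (l : seq T) (q : nat) :
  (0 < q)%N -> all (mem A) l -> (#|A| * (q - 1) < size l)%N ->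
  exists x, (q <= count_mem x l)%N.
Proof.
move=> q_gt0 allA long_l.
suff /existsP [x hx] : [exists x, q <= count_mem x l]%N by exists x.
move: long_l; apply: contraLR; rewrite negb_exists -leqNgt => /forallP small.
rewrite size_sum_count_mem (bigID (mem A)) /= [X in (_ + X)%N]big1 ?addn0 => [|x nAx].
  rewrite -sum1_card big_distrl /=; apply: leq_sum => x _.
  by rewrite mul1n -ltnS subn1 prednK // ltnNge small.
by apply/count_memPn; apply: contra nAx; apply: (allP allA).
Qed.

Section SchurComplement.
Variables (F : fieldType) (m n k : nat) (hkm : (k <= m)%N) (hkn : (k <= n)%N).
Local Notation RR := {mpoly F[m * n]}.
Local Notation X := (@Defs.genmx F m n).
Local Notation rowk a := (widen_ord hkm a).
Local Notation colk b := (widen_ord hkn b).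

Definition corner : 'M[RR]_k := \matrix_(a, b) X (rowk a) (colk b).
Definition delta : RR := \det corner.
Definition top_rows : 'M[RR]_(k, n) := \matrix_(a, j) X (rowk a) j.
Definition schur_coef : 'M[RR]_(m, k) := \matrix_(i, b)
  if (i < k)%N then delta *+ (i == b :> nat) else (\row_c X i (colk c) *m \adj corner) 0 b.

(* [schur] is [delta] times the Schur complement of [corner] in [X], padded with zeros. *)
Definition schur : 'M[RR]_(m, n) := delta *: X - schur_coef *m top_rows.

Definition in_corner (x : 'I_m * 'I_n) := ((k <= x.1) && (k <= x.2))%N.

Lemma scale_delta_genmx : delta *: X = schur_coef *m top_rows + schur.
Proof. by rewrite /schur addrC subrK. Qed.

Lemma schur_eq0 i j : ~~ in_corner (i, j) -> schur i j = 0.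
Proof.
move=> out_ij; apply/eqP; rewrite /schur !mxE subr_eq0; apply/eqP.
have [hi|hi] := ltnP i k.
  have rk_i : rowk (Ordinal hi) = i by apply: val_inj.
  rewrite (bigD1 (Ordinal hi)) //= big1 ?addr0 => [|b hb].
    by rewrite !mxE hi eqxx mulr1n rk_i.
  rewrite !mxE hi; case: eqP => [h|_]; last by rewrite mulr0n mul0r.
  by case/eqP: hb; apply: val_inj; rewrite /= h.
have hj : (j < k)%N by move: out_ij; rewrite /in_corner /= hi -ltnNge.
have ck_j : colk (Ordinal hj) = j by apply: val_inj.
have -> : \sum_b schur_coef i b * top_rows b j
    = ((\row_c X i (colk c) *m \adj corner) *m corner) 0 (Ordinal hj).
  by rewrite [RHS]mxE; apply: eq_bigr => b _; rewrite !mxE ltnNge hi /= ck_j.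
by rewrite -mulmxA mul_adj_mx mul_mx_scalar !mxE ck_j.
Qed.

Section Specialization.
Variables (S : comNzRingType) (phi : {rmorphism RR -> S}).

Lemma rmorph_schur_eq0 (i : 'I_m) (j : 'I_n) :
  (forall (i' : 'I_m) (j' : 'I_n), (k <= i')%N -> phi (X i' j') = 0) ->
  (k <= i)%N -> phi (schur i j) = 0.
Proof.
move=> phi0 hi.
have phi_var (i' : 'I_m) j' : (k <= i')%N -> phi (var F (mxvec_index i' j')) = 0.
  by move=> hi'; rewrite -(phi0 i' j' hi') mxE.
rewrite /schur !mxE rmorphB rmorphM phi_var // mulr0 sub0r rmorph_sum big1 ?oppr0 // => b _.
rewrite rmorphM !mxE ltnNge hi /= rmorph_sum big1 ?mul0r // => c _.
by rewrite !mxE rmorphM phi_var // mul0r.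
Qed.

Lemma rmorph_delta (z : S) :
  (forall a b : 'I_k, phi (X (rowk a) (colk b)) = z *+ (a == b)) -> phi delta = z ^+ k.
Proof.
move=> phi_corner; rewrite /delta -det_map_mx.
have -> : map_mx phi corner = z%:M.
  by apply/matrixP => a b; rewrite [LHS]mxE [corner _ _]mxE phi_corner [RHS]mxE.
by rewrite det_scalar.
Qed.

End Specialization.

Lemma card_in_corner : #|in_corner| = ((m - k) * (n - k))%N.
Proof.
rewrite -sum1_card big_mkcond /=.
rewrite -(pair_big xpredT xpredT (fun i j => if in_corner (i, j) then 1 else 0)%N) /=.
rewrite -sum_ord_geq big_distrl /=; apply: eq_bigr => i _.
rewrite -sum_ord_geq big_distrr /=; apply: eq_bigr => j _.
by rewrite /in_corner /=; case: (k <= i)%N; case: (k <= j)%N.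
Qed.

Definition corner_prods (s : nat) (g : RR) := exists l : seq ('I_m * 'I_n),
  [/\ all in_corner l, (s <= size l)%N & g = \prod_(x <- l) schur x.1 x.2].
Local Notation schur_pow s := (lincomb (corner_prods s)).

Lemma schur_pow0 u : schur_pow 0 u.
Proof.
rewrite -[u]mulr1; apply: lincombMl; apply: lincomb_gen.
by exists [::]; rewrite big_nil.
Qed.

Lemma schur_pow_le s s' u : (s' <= s)%N -> schur_pow s u -> schur_pow s' u.
Proof.
move=> le_s hu; apply: (lincomb_trans hu) => g [l [all_l long_l ->]]; apply: lincomb_gen.
by exists l; split => //; apply: leq_trans long_l.
Qed.

Lemma schur_powM s s' u v : schur_pow s u -> schur_pow s' v -> schur_pow (s + s') (u * v).
Proof.
move=> hu hv; apply: (lincombM hu hv) => x y [l1 [a1 b1 ->]] [l2 [a2 b2 ->]].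
apply: lincomb_gen; exists (l1 ++ l2).
by rewrite all_cat a1 a2 size_cat leq_add // big_cat.
Qed.

Lemma schur_pow_entry i j : schur_pow 1 (schur i j).
Proof.
have [c_ij|out_ij] := boolP (in_corner (i, j)).
  by apply: lincomb_gen; exists [:: (i, j)]; rewrite /= c_ij big_seq1.
by rewrite schur_eq0 //; exact: lincomb0.
Qed.

Lemma schur_pow_det_row_mix t (f : {ffun 'I_t -> bool}) (A E : 'M[RR]_t) :
  (forall i j, schur_pow 1 (E i j)) ->
  schur_pow (\sum_i (f i : nat)) (\det (row_mix f A E)).
Proof.
move=> hE; apply: lincomb_sum_fin => s _; apply: lincombMl.
apply: (big_rec2 (fun s u => schur_pow s u)); first exact: schur_pow0.
move=> i s' u _ hu; apply: schur_powM => //; rewrite mxE.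
by case: (f i) => /=; [exact: hE | exact: schur_pow0].
Qed.

(* [delta X = P Q + schur] with [rank (P Q) <= k]: in the row expansion of a [t]-minor,
   the terms taking fewer than [t - k] rows from [schur] vanish. *)
Lemma schur_pow_minor t (rs : 'I_t -> 'I_m) (cs : 'I_t -> 'I_n) :
  schur_pow (t - k) (delta ^+ t * \det (mxsub rs cs X)).
Proof.
have -> : delta ^+ t * \det (mxsub rs cs X) = \det
    (rowsub rs schur_coef *m colsub cs top_rows + mxsub rs cs schur).
  rewrite -detZ -mxsub_mul; congr (\det _).
  have -> : delta *: mxsub rs cs X = mxsub rs cs (delta *: X).
    by apply/matrixP => a b; rewrite !mxE.
  by rewrite scale_delta_genmx; apply/matrixP => a b; rewrite !mxE.
rewrite detD_row_mix; apply: lincomb_sum_fin => f _.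
have [few_f|many_f] := ltnP (\sum_i (f i : nat) + k) t.
  by rewrite det_row_mix_mul_eq0 //; exact: lincomb0.
apply: (@schur_pow_le (\sum_i (f i : nat))); first by rewrite leq_subLR addnC.
by apply: schur_pow_det_row_mix => a b; rewrite mxE; exact: schur_pow_entry.
Qed.

Lemma schur_pow_pow_gens t r g : pow_gens (@minors_gens F m n t) r g ->
  schur_pow (r * (t - k)) (delta ^+ (t * r) * g).
Proof.
move=> [hs [<- [in_I ->]]]; elim: hs in_I => [|h hs IH] in_I.
  by rewrite big_nil mul0n; apply: schur_pow0.
rewrite big_cons /= mulnS exprD mulrACA mulSn; apply: schur_powM.
  have /in_idealP I_h : in_ideal (@minors_gens F m n t) h by apply: in_I; rewrite inE eqxx.
  by apply: (lincombMl_trans I_h) => _ [rs [cs [_ [_ ->]]]]; apply: schur_pow_minor.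
by apply: IH => x xs; apply: in_I; rewrite inE xs orbT.
Qed.

Lemma schur_pow_minors_pow t r f : in_ideal (pow_gens (@minors_gens F m n t) r) f ->
  schur_pow (r * (t - k)) (delta ^+ (t * r) * f).
Proof. by move/in_idealP/lincombMl_trans; apply => g; apply: schur_pow_pow_gens. Qed.

Definition corner_frob_gens (q : nat) (g : RR) :=
  exists2 x, in_corner x & exists w, g = schur x.1 x.2 ^+ q * w.

Lemma schur_pow_frob_gens s q u : (0 < q)%N -> ((m - k) * (n - k) * (q - 1) < s)%N ->
  schur_pow s u -> lincomb (corner_frob_gens q) u.
Proof.
move=> q_gt0 large_s hu; apply: (lincomb_trans hu) => g [l [all_l long_l ->]].
have [x hx] : exists x, (q <= count_mem x l)%N.
  apply: (count_mem_pigeonhole (A := in_corner)) => //.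
  by rewrite card_in_corner (leq_trans large_s).
have x_l : x \in l by rewrite -has_pred1 has_count (leq_trans q_gt0 hx).
apply: lincomb_gen; exists x; first exact: (allP all_l).
rewrite (bigID (pred1 x)) /= (eq_bigr (fun _ => schur x.1 x.2)) => [|y /eqP -> //].
rewrite big_const_seq iter_mulr_1 -(subnK hx) exprD.
by eexists; rewrite [X in X * _]mulrC -mulrA.
Qed.

End SchurComplement.

Section MinorsPowers.
Variables (F : fieldType) (p : nat) (hp : p \in [pchar F]) (e : nat).
Variables (m n t k : nat) (hkm : (k <= m)%N) (hkn : (k <= n)%N).
Local Notation q := (p ^ e)%N.
Local Notation RR := {mpoly F[m * n]}.
Local Notation X := (@Defs.genmx F m n).
Local Notation delta := (delta F hkm hkn).
Local Notation schur := (schur F hkm hkn).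

Definition diag_var (u : 'I_(m * n)) : {poly F} :=
  mxvec (\matrix_(i < m, j < n) if ((i : nat) == j) && (i < k)%N then 'X else 0) 0 u.
Local Notation diag_eval := (mmap (@polyC F) diag_var).
Definition frob_diag_eval : {rmorphism RR -> {poly F}} :=
  diag_eval \o map_mpoly (frobn hp e).

Lemma horner0_diag_var u : (diag_var u).[0] = 0.
Proof.
case/mxvec_indexP: u => i j; rewrite /diag_var mxvecE mxE.
by case: ifP; rewrite ?hornerX ?horner0.
Qed.

Lemma frob_diag_eval_X i j :
  frob_diag_eval (X i j) = if ((i : nat) == j) && (i < k)%N then 'X else 0.
Proof. by rewrite /= mxE /var map_mpolyX mmapX mmap1U /diag_var mxvecE mxE. Qed.

Lemma frob_diag_eval_delta : frob_diag_eval delta = 'X ^+ k.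
Proof.
apply: rmorph_delta => a b; rewrite frob_diag_eval_X /= ltn_ord andbT.
by rewrite (inj_eq val_inj); case: eqP.
Qed.

Lemma diag_eval_cartier_frob_gens (a : 'X_{1..m * n}) u : (forall i, (a i < q)%N) ->
  lincomb (corner_frob_gens hkm hkn q) u -> diag_eval (cartier q a u) = 0.
Proof.
move=> a_lt_q [l [gens_l ->]]; rewrite linear_sum raddf_sum; apply: big1_seq.
move=> y /andP [_ /gens_l [x /andP [x1 _] [w ->]]] /=.
rewrite mulrCA (cartier_frobM hp a_lt_q) rmorphM /=.
have -> : diag_eval (map_mpoly (frobn hp e) (schur x.1 x.2)) = 0.
  apply: (@rmorph_schur_eq0 _ _ _ _ hkm hkn _ frob_diag_eval) => // i j ki.
  by rewrite frob_diag_eval_X ltnNge ki andbF.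
by rewrite mul0r.
Qed.

Lemma mcoeff_minors_pow_eq0 r f (a : 'X_{1..m * n}) : (forall i, (a i < q)%N) ->
  ((m - k) * (n - k) * (q - 1) < r * (t - k))%N ->
  in_ideal (pow_gens (@minors_gens F m n t) r) f -> f@_a = 0.
Proof.
move=> a_lt_q large_r /(schur_pow_minors_pow hkm hkn); set d := delta ^+ (t * r) => hf.
have q_gt0 : (0 < q)%N := pchar_expn_gt0 e hp.
have : lincomb (corner_prods hkm hkn (r * (t - k))) (d ^+ q * f).
  by rewrite -(subnK q_gt0) exprD expr1 -mulrA; apply: lincombMl.
move/(schur_pow_frob_gens q_gt0 large_r)/(diag_eval_cartier_frob_gens a_lt_q).
rewrite (cartier_frobM hp a_lt_q) rmorphM /=.
have -> : diag_eval (map_mpoly (frobn hp e) d) = 'X ^+ (k * (t * r)).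
  by rewrite -[LHS]/(frob_diag_eval d) rmorphXn frob_diag_eval_delta -exprM.
move/eqP; rewrite mulf_eq0 expf_eq0 polyX_eq0 andbF /= => /eqP eval0.
by rewrite -(mcoeff0_cartier q) -(horner0_mmap _ horner0_diag_var) eval0 horner0.
Qed.

Lemma minors_pow_sub_frob_max r : ((m - k) * (n - k) * (q - 1) < r * (t - k))%N ->
  ideal_sub (pow_gens (@minors_gens F m n t) r) (@frob_max_gens (m * n) F q).
Proof.
move=> large_r f hf; apply/in_idealP; apply: lincomb_frob_max_gens => a a_lt_q.
exact: mcoeff_minors_pow_eq0 a_lt_q large_r hf.
Qed.

End MinorsPowers.

Lemma nu_minors_le (R : realType) (F : fieldType) (p : nat) (hp : p \in [pchar F])
    (m n t k : nat) (hkm : (k <= m)%N) (hkn : (k <= n)%N) (htk : (k < t)%N) (e : nat) :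
  @nu R (m * n) F (@minors_gens F m n t) (p ^ e) <=
    ((m - k)%:R * (n - k)%:R) / (t - k)%:R * (p ^ e)%:R.
Proof.
rewrite /nu; set E := (X in sup X); set c := _ * (p ^ e)%:R.
have c_ge0 : 0 <= c by rewrite !mulr_ge0 ?invr_ge0.
have [E0|E_neq0] := eqVneq E set0; first by rewrite E0 sup0.
apply: ge_sup; first exact/set0P.
move=> _ [r /= not_sub <-]; rewrite /c mulrAC ler_pdivlMr ?ltr0n ?subn_gt0 //.
rewrite -!natrM ler_nat; apply: leq_trans (_ : (m - k) * (n - k) * (p ^ e - 1) <= _)%N.
  by rewrite leqNgt; apply/negP => /(minors_pow_sub_frob_max hp hkm hkn).
by rewrite leq_mul2l leq_subr orbT.
Qed.

Theorem mainTheorem4 (R : realType) (F : fieldType) (p : nat)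
    (hp : p \in [pchar F]) (m n t : nat)
    (ht : (0 < t)%N) (htm : (t <= m)%N) (hmn : (m <= n)%N)
    (k : nat) (hk : (k <= t - 1)%N) :
  @fpt R (m * n) F p (@minors_gens F m n t) <=
    ((m - k)%:R * (n - k)%:R) / (t - k)%:R.
Proof.
have htk : (k < t)%N by move: hk; rewrite -ltnS subn1 prednK.
have hkm : (k <= m)%N := leq_trans (ltnW htk) htm.
have hkn : (k <= n)%N := leq_trans hkm hmn.
set c := _ / _; have c_ge0 : 0 <= c by rewrite !mulr_ge0 ?invr_ge0.
have nu_le e : @nu R (m * n) F (@minors_gens F m n t) (p ^ e) / (p ^ e)%:R <= c.
  by rewrite ler_pdivrMr ?ltr0n ?(pchar_expn_gt0 e hp) // nu_minors_le.
rewrite /fpt; set u := fun e => _.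
have [u_cvg|u_div] := pselect (cvgn u); first by apply: limr_le => //; apply: nearW.
(* [limn] of a divergent sequence is the junk value [point = 0]. *)
by rewrite /lim /lim_in getPN // => l /cvgP.
Qed.
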